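(* In $A_n$, for $1\le i\le n-1$ and $a\in\mathbb{N}_0$, \[ \omega_{i+1}^a = x_{i+1}T_i\,\omega_i^a\,T_i - T_i\,\omega_i^a\,T_i\,x_i . \]
   Context: $A_n$ is the bigraded $\mathbb{Z}$-superalgebra generated by even $x_1,\dots,x_n$, even $T_1,\dots,T_{n-1}$ and odd $\omega_1,\dots,\omega_n$ with relations: $T_i^2=0$, $T_iT_j=T_jT_i$ ($|i-j|>1$), $T_iT_{i+1}T_i=T_{i+1}T_iT_{i+1}$, $x_ix_j=x_jx_i$, $T_ix_j=x_jT_i$ ($j\neq i,i+1$), $T_ix_i-x_{i+1}T_i=1$, $T_ix_{i+1}-x_iT_i=-1$, $\omega_i\omega_j=-\omega_j\omega_i$, $x_i\omega_j=\omega_jx_i$, $T_i\omega_j=\omega_jT_i$ ($i\ne j$), $T_i(\omega_i-x_{i+1}\omega_{i+1})=(\omega_i-x_{i+1}\omega_{i+1})T_i$ (equivalently, operators on $\mathbb{Z}[x]\otimes\bigwedge^\bullet(\omega)$ generated by Demazure operators and multiplications). Labeled elements: $\omega_k^0=\omega_k$, $\omega_0^a=0$, $\omega_k^a=\omega_{k-1}^{a-1}-x_k\omega_k^{a-1}$ for $a\ge1$. *)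

From mathcomp Require Import all_boot all_order all_algebra.
Set Implicit Arguments. Unset Strict Implicit. Unset Printing Implicit Defensive.
Import GRing.Theory.
Local Open Scope ring_scope.

(* A_n is the ring presented by
   these generators and relations, so an identity holds in A_n iff it holds
   for every such family in every ring (universal property). *)
Record An_relations (R : pzRingType) (n : nat)
    (x : nat -> R) (T : nat -> R) (w : nat -> R) : Prop := {
  rel_TT : forall i, (1 <= i <= n.-1)%N -> T i * T i = 0;
  rel_Tcomm : forall i j, (1 <= i <= n.-1)%N -> (1 <= j <= n.-1)%N ->
     (i.+1 < j)%N || (j.+1 < i)%N -> T i * T j = T j * T i;
  rel_braid : forall i, (1 <= i)%N -> (i.+1 <= n.-1)%N ->
     T i * T i.+1 * T i = T i.+1 * T i * T i.+1;
  rel_xx : forall i j, (1 <= i <= n)%N -> (1 <= j <= n)%N -> x i * x j = x j * x i;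
  rel_Tx : forall i j, (1 <= i <= n.-1)%N -> (1 <= j <= n)%N ->
     j != i -> j != i.+1 -> T i * x j = x j * T i;
  rel_Txi : forall i, (1 <= i <= n.-1)%N -> T i * x i - x i.+1 * T i = 1;
  rel_Txi1 : forall i, (1 <= i <= n.-1)%N -> T i * x i.+1 - x i * T i = -1;
  rel_ww : forall i j, (1 <= i <= n)%N -> (1 <= j <= n)%N -> w i * w j = - (w j * w i);
  rel_xw : forall i j, (1 <= i <= n)%N -> (1 <= j <= n)%N -> x i * w j = w j * x i;
  rel_Tw : forall i j, (1 <= i <= n.-1)%N -> (1 <= j <= n)%N ->
     j != i -> T i * w j = w j * T i;
  rel_Tww : forall i, (1 <= i <= n.-1)%N ->
     T i * (w i - x i.+1 * w i.+1) = (w i - x i.+1 * w i.+1) * T i }.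

Fixpoint omega_lab (R : pzRingType) (x w : nat -> R) (a k : nat) : R :=
  match k with
  | 0%N => 0
  | k'.+1 =>
      match a with
      | 0%N => w k
      | a'.+1 => omega_lab x w a' k' - x k * omega_lab x w a' k
      end
  end.

(* Write S(y) := x_{i+1} T_i y T_i - T_i y T_i x_i.  S is additive and kills everything
   commuting with T_i (as T_i^2 = 0), and the nil-Hecke relations give
   S(x_i y) = x_{i+1} S(y) - y and S(x_{i+1} c) = c for c commuting with T_i and x_{i+1}.
   For a = 0, S(w_i) = S(x_{i+1} w_{i+1}) = w_{i+1} because T_i commutes with
   w_i - x_{i+1} w_{i+1}.  For a > 0, w_i^a = w_{i-1}^{a-1} - x_i w_i^{a-1} with T_i
   commuting with w_{i-1}^{a-1}, so S(w_i^a) = w_i^{a-1} - x_{i+1} S(w_i^{a-1}), which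
   is w_{i+1}^a by induction. *)
From mathcomp Require Import all_boot all_order all_algebra zify.
Set Implicit Arguments. Unset Strict Implicit. Unset Printing Implicit Defensive.
Import GRing.Theory.
Local Open Scope ring_scope.

Section Sandwich.

Variables (R : pzRingType) (xa xb t : R).

Definition sandwich (y : R) : R := xb * t * y * t - t * y * t * xa.

Lemma sandwichB (y z : R) : sandwich (y - z) = sandwich y - sandwich z.
Proof.
rewrite /sandwich !(mulrBr, mulrBl) !opprB.
by rewrite addrACA [RHS]addrACA [X in _ = _ + X]addrC.
Qed.

Hypothesis tt0 : t * t = 0.

Lemma sandwich_comm0 (c : R) : t * c = c * t -> sandwich c = 0.
Proof.
move=> tc; have tct0 : t * c * t = 0 by rewrite tc -mulrA tt0 mulr0.
by rewrite /sandwich -(mulrA xb t c) -(mulrA xb) tct0 mulr0 mul0r subrr.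
Qed.

Hypothesis txa : t * xa - xb * t = 1.

Lemma sandwichMxa (y : R) : xb * y = y * xb ->
  sandwich (xa * y) = xb * sandwich y - y.
Proof.
move=> yb; have e : t * xa = xb * t + 1 by rewrite -txa addrC subrK.
have l : xb * t * (xa * y) * t = xb * (xb * t * y * t) + xb * y * t.
  by rewrite -!mulrA (mulrA t xa) e !(mulrDl, mulrDr, mul1r) !mulrA.
have r : t * (xa * y) * t * xa = xb * (t * y * t * xa) + (xb * y * t + y).
  by rewrite (mulrA t xa) e !mulrDl mul1r -(mulrA y) e mulrDr mulr1 !mulrA yb.
by rewrite /sandwich l r mulrBr !opprD !addrA (addrAC _ (xb * y * t)) addrK.
Qed.

Hypothesis txb : t * xb - xa * t = -1.

Lemma sandwichMxb (c : R) : t * c = c * t -> xb * c = c * xb ->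
  sandwich (xb * c) = c.
Proof.
move=> tc bc; have e : t * xb = xa * t - 1 by rewrite -txb addrC subrK.
have tbt : t * xb * t = - t by rewrite e mulrBl -mulrA tt0 mulr0 mul1r sub0r.
have tbct : t * (xb * c) * t = - (c * t).
  by rewrite mulrA -mulrA -tc mulrA tbt mulNr.
rewrite /sandwich tbct -(mulrA xb t) -(mulrA xb) tbct mulNr mulrN opprK.
by rewrite mulrA bc addrC -!mulrA -mulrBr txa mulr1.
Qed.

End Sandwich.

Section LabeledOmega.

Variables (R : pzRingType) (n : nat) (x T w : nat -> R).
Hypothesis An : An_relations n x T w.

Lemma x_omega_labC j b k : (1 <= j <= n)%N -> (k <= n)%N ->
  x j * omega_lab x w b k = omega_lab x w b k * x j.
Proof.
move=> hj; elim: b k => [|b IH] [|k] hk //=; rewrite ?mulr0 ?mul0r //.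
  exact: (rel_xw An).
rewrite mulrBr mulrBl IH; last exact: ltnW.
by rewrite mulrA (rel_xx An hj) // -mulrA IH // mulrA.
Qed.

Lemma T_omega_labC i b k : (1 <= i <= n.-1)%N -> (k < i)%N ->
  T i * omega_lab x w b k = omega_lab x w b k * T i.
Proof.
move=> hi; elim: b k => [|b IH] [|k] hk //=; rewrite ?mulr0 ?mul0r //.
  by apply: (rel_Tw An hi); [lia | rewrite neq_ltn hk].
rewrite mulrBr mulrBl IH; last exact: ltnW.
rewrite mulrA (rel_Tx An hi); try lia.
by rewrite -mulrA IH // mulrA.
Qed.

Lemma omega_succ_sandwich0 i : (1 <= i <= n.-1)%N ->
  w i.+1 = sandwich (x i) (x i.+1) (T i) (w i).
Proof.
move=> hi; have tt0 := rel_TT An hi.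
have S_diff0 : sandwich (x i) (x i.+1) (T i) (w i - x i.+1 * w i.+1) = 0.
  by apply: (sandwich_comm0 _ _ tt0); exact: (rel_Tww An).
rewrite sandwichB in S_diff0; rewrite (subr0_eq S_diff0) sandwichMxb //.
- exact: (rel_Txi An).
- exact: (rel_Txi1 An).
- by apply: (rel_Tw An hi); lia.
- by apply: (rel_xw An); lia.
Qed.

Lemma omega_succ_sandwich i a : (1 <= i <= n.-1)%N ->
  omega_lab x w a i.+1 = sandwich (x i) (x i.+1) (T i) (omega_lab x w a i).
Proof.
case: i => [//|i] hi.
elim: a => [|a IH] /=; first exact: omega_succ_sandwich0.
rewrite sandwichB sandwich_comm0; [|exact: (rel_TT An) | exact: T_omega_labC].
rewrite sandwichMxa; first by rewrite IH sub0r opprB.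
- exact: (rel_Txi An).
- by apply: x_omega_labC; lia.
Qed.

End LabeledOmega.

Theorem lemma2p4 (R : pzRingType) (n : nat) (x T w : nat -> R) :
  An_relations n x T w ->
  forall (i a : nat), (1 <= i <= n.-1)%N ->
    omega_lab x w a i.+1 =
      x i.+1 * T i * omega_lab x w a i * T i - T i * omega_lab x w a i * T i * x i.
Proof. move=> An i a; exact: (omega_succ_sandwich An). Qed.
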